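(* Let $p$ be a prime and $G$ a $p$-group of order $p^m$ with $|G/Z(G)|=p^2$. Then $$B_G(t)=\frac{1-p^{m-3}t}{(1-p^{m-2}t)(1-p^{m-1}t)}.$$
   Context: For a finite group $G$ and $n\ge0$, let $G^{(n)}=\{(x_1,\dots,x_n)\in G^n: x_ix_j=x_jx_i\ \forall i,j\}$, on which $G$ acts by simultaneous conjugation; let $\beta_{G,n}$ be the number of orbits and $B_G(t)=\sum_{n\ge0}\beta_{G,n}t^n$, viewed as a rational function of $t$. *)

From HB Require Import structures.
From mathcomp Require Import all_boot all_order all_algebra all_fingroup all_solvable.
Set Implicit Arguments. Unset Strict Implicit. Unset Printing Implicit Defensive.
Import GRing.Theory.
Open Scope group_scope.

Definition commuting_tuples (gT : finGroupType) (G : {set gT}) (n : nat)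
  : {set {ffun 'I_n -> gT}} :=
  [set x : {ffun 'I_n -> gT} | [forall i, x i \in G] &&
     [forall i, forall j, x i * x j == x j * x i]].

Definition conj_tuple (gT : finGroupType) (n : nat) (x : {ffun 'I_n -> gT}) (g : gT)
  : {ffun 'I_n -> gT} := [ffun i => x i ^ g].

Definition tuple_orbit (gT : finGroupType) (G : {set gT}) (n : nat)
  (x : {ffun 'I_n -> gT}) : {set {ffun 'I_n -> gT}} :=
  [set conj_tuple x g | g in G].

Definition beta (gT : finGroupType) (G : {set gT}) (n : nat) : nat :=
  #|[set tuple_orbit G x | x in commuting_tuples G n]|.

(* truncation of the generating function B_G(t) to degree N, as a rational polynomial *)
Definition B_trunc (gT : finGroupType) (G : {set gT}) (N : nat) : {poly rat} :=
  (\sum_(n < N.+1) ((beta G n)%:R : rat) *: 'X^n)%R.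

(* Burnside's lemma and the bijection between G^(n+1) and the pairs (x, g) with
   x in G^(n) and g in C_G(x) give
     beta_{G,n} |G| = |G^(n+1)| = sum_{x in G^(n)} |C_G(x)|.
   When |G : Z(G)| = p^2, the centraliser of a commuting tuple x is G if x is
   central, and otherwise a subgroup strictly between Z(G) and G (it contains
   the entries of x), hence of index p.  As there are |Z(G)|^n central tuples,
   c_n = |G^(n)| satisfies c_(n+1) = p^(m-1) c_n + (p^m - p^(m-1)) p^((m-2) n),
   so beta_{G,n} = c_(n+1) / p^m satisfies the linear recurrence with
   characteristic polynomial (1 - p^(m-1) t)(1 - p^(m-2) t), and its first two
   terms produce the numerator 1 - p^(m-3) t. *)

From HB Require Import structures.
From mathcomp Require Import all_boot all_order all_algebra all_fingroup all_solvable.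
From mathcomp Require Import ring.
Import GRing.Theory Num.Theory.

Set Implicit Arguments.
Unset Strict Implicit.
Unset Printing Implicit Defensive.

Section StabiliserCount.
Variables (aT : finGroupType) (D : {group aT}) (rT : finType) (to : action D rT).
Variables (G : {group aT}) (S : {set rT}).

Lemma sum_card_astab1 : G \subset D ->
  \sum_(x in S) #|'C_G[x | to]| = \sum_(a in G) #|'Fix_(S | to)[a]|.
Proof.
move=> sGD.
transitivity (\sum_(x in S) \sum_(a in G | to x a == x) 1).
  apply: eq_bigr => x _; rewrite sum1dep_card; apply: eq_card => a.
  by rewrite !inE sub1set inE; apply: andb_id2l => /(subsetP sGD) ->.
rewrite (exchange_big_dep [in G]) => [|x a _ /andP[] //].
apply: eq_bigr => a Ga; rewrite sum1dep_card; apply: eq_card => x.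
by rewrite !inE sub1set inE Ga.
Qed.

Lemma Frobenius_Cauchy_astab1 : [acts G, on S | to] ->
  (#|orbit to G @: S| * #|G| = \sum_(x in S) #|'C_G[x | to]|)%N.
Proof.
by move=> GactS; rewrite -Frobenius_Cauchy // sum_card_astab1 ?(acts_dom GactS).
Qed.
End StabiliserCount.

Section ConjTupleAction.
Variables (gT : finGroupType) (n : nat).
Implicit Types (x : {ffun 'I_n -> gT}) (G : {group gT}).

Lemma conj_tuple1 : (fun x : {ffun 'I_n -> gT} => conj_tuple x 1) =1 id.
Proof. by move=> x; apply/ffunP => i; rewrite ffunE conjg1. Qed.

Lemma conj_tupleM x : act_morph (@conj_tuple gT n) x.
Proof. by move=> a b; apply/ffunP => i; rewrite !ffunE conjgM. Qed.

Definition conj_tuple_action := TotalAction conj_tuple1 conj_tupleM.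

Lemma astab1_conj_tuple x : 'C[x | conj_tuple_action] = 'C([set x i | i : 'I_n]).
Proof.
apply/setP => a; apply/astab1P/centP => [fix_a _ /imsetP[i _ ->] | cent_a].
  apply/esym/commgP/conjg_fixP.
  by move/ffunP: fix_a => /(_ i); rewrite /= ffunE.
apply/ffunP => i; rewrite ffunE; apply/conjg_fixP/commgP.
exact/esym/cent_a/imset_f.
Qed.

Lemma commuting_tuplesE G x : (x \in commuting_tuples G n) =
  ([set x i | i : 'I_n] \subset G) && abelian [set x i | i : 'I_n].
Proof.
rewrite inE; congr andb.
  by apply/forallP/subsetP => [xG _ /imsetP[i _ ->] | sXG i] //; exact/sXG/imset_f.
apply/forallP/centsP => [xC _ /imsetP[i _ ->] _ /imsetP[j _ ->] | cX i].
  exact/eqP/(forallP (xC i) j).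
by apply/forallP => j; apply/eqP/esym/cX; apply: imset_f.
Qed.

Lemma acts_commuting_tuples G : [acts G, on commuting_tuples G n | conj_tuple_action].
Proof.
apply/actsP => a Ga x /=; rewrite !commuting_tuplesE.
have -> : [set conj_tuple x a i | i : 'I_n] = [set x i | i : 'I_n] :^ a.
  by rewrite /conjugate -imset_comp; apply: eq_imset => i; rewrite /= ffunE.
by rewrite abelianJ sub_conjg conjGid ?groupV.
Qed.
End ConjTupleAction.

Section ExtendTuple.
Variables (T : finType) (n : nat).
Implicit Type x : {ffun 'I_n -> T}.

Definition extend_tuple x (g : T) : {ffun 'I_n.+1 -> T} :=
  [ffun i => if unlift ord_max i is Some k then x k else g].

Lemma extend_tuple_lift x g k : extend_tuple x g (lift ord_max k) = x k.
Proof. by rewrite ffunE liftK. Qed.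

Lemma extend_tuple_max x g : extend_tuple x g ord_max = g.
Proof. by rewrite ffunE unlift_none. Qed.

Lemma extend_tuple_bij :
  bijective (fun u : {ffun 'I_n -> T} * T => extend_tuple u.1 u.2).
Proof.
exists (fun y : {ffun 'I_n.+1 -> T} => ([ffun k => y (lift ord_max k)], y ord_max)).
  move=> [x g] /=; rewrite extend_tuple_max; congr (_, _).
  by apply/ffunP => k; rewrite ffunE extend_tuple_lift.
move=> y; apply/ffunP => i; rewrite ffunE.
by case: unliftP => [k ->|->] //=; rewrite ffunE.
Qed.

Lemma imset_extend_tuple x g :
  [set extend_tuple x g i | i : 'I_n.+1] = g |: [set x i | i : 'I_n].
Proof.
apply/setP => y; rewrite in_setU1.
apply/imsetP/predU1P => [[i _ ->] | [-> | /imsetP[k _ ->]]].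
- case: (unliftP ord_max i) => [k -> | ->]; last by left; rewrite extend_tuple_max.
  by right; rewrite extend_tuple_lift imset_f.
- by exists ord_max; rewrite ?extend_tuple_max.
- by exists (lift ord_max k); rewrite ?extend_tuple_lift.
Qed.
End ExtendTuple.

Lemma abelianU1 (gT : finGroupType) (A : {set gT}) g :
  abelian (g |: A) = (g \in 'C(A)) && abelian A.
Proof.
rewrite /abelian centU subUset !subsetI !sub1set cent_set1 cent1id /=.
by rewrite -cent_set1 centsC sub1set andbA andbb.
Qed.

Section CommutingTuplesCount.
Variables (gT : finGroupType) (G : {group gT}) (n : nat).
Implicit Types (x : {ffun 'I_n -> gT}) (g : gT).

Lemma extend_tuple_in_commuting_tuples x g :
  (extend_tuple x g \in commuting_tuples G n.+1) =
  (x \in commuting_tuples G n) && (g \in 'C_G[x | conj_tuple_action gT n]).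
Proof.
rewrite !commuting_tuplesE imset_extend_tuple abelianU1 subUset sub1set.
rewrite astab1_conj_tuple inE.
set X := [set x i | i : 'I_n].
by case: (g \in G); case: (g \in 'C(X)); rewrite /= ?andbT ?andbF.
Qed.

Lemma card_commuting_tuplesS : #|commuting_tuples G n.+1| =
  (\sum_(x in commuting_tuples G n) #|'C_G[x | conj_tuple_action gT n]|)%N.
Proof.
rewrite -sum1_card (reindex _ (onW_bij _ (@extend_tuple_bij _ n))) /=.
under [RHS]eq_bigr do rewrite -sum1_card.
rewrite pair_big_dep /=; apply: eq_bigl => u.
exact: extend_tuple_in_commuting_tuples.
Qed.

Lemma card_commuting_tuples0 : #|commuting_tuples G 0| = 1%N.
Proof.
suff -> : commuting_tuples G 0 = setT by rewrite cardsT card_ffun card_ord.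
by apply/setP => x; rewrite !inE; apply/andP; split; apply/forallP => - [].
Qed.

Lemma beta_mul_card : (beta G n * #|G| = #|commuting_tuples G n.+1|)%N.
Proof.
by rewrite card_commuting_tuplesS -Frobenius_Cauchy_astab1 ?acts_commuting_tuples.
Qed.

Lemma card_central_tuples :
  #|[set x in commuting_tuples G n | [set x i | i : 'I_n] \subset 'Z(G)]| =
  (#|'Z(G)| ^ n)%N.
Proof.
rewrite -[n in RHS]card_ord -card_ffun_on; apply: eq_card => x.
have -> : x \in ffun_on 'Z(G) = ([set x i | i : 'I_n] \subset 'Z(G)).
  by apply/ffun_onP/subsetP => [xZ _ /imsetP[i _ ->] | sXZ i] //; exact/sXZ/imset_f.
rewrite inE commuting_tuplesE; case: (boolP (_ \subset 'Z(G))) => [sXZ | _].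
  by rewrite (subset_trans sXZ (center_sub G)) (abelianS sXZ (center_abelian G)).
by rewrite andbF.
Qed.
End CommutingTuplesCount.

Section CenterOfIndexPrimeSquare.
Variables (gT : finGroupType) (G : {group gT}) (p : nat).
Hypotheses (p_pr : prime p) (indexZ : #|G : 'Z(G)| = (p ^ 2)%N).

Lemma index_between_center (H : {group gT}) :
  'Z(G) \proper H -> H \proper G -> #|G : H| = p.
Proof.
rewrite !properE => /andP[sZH nsHZ] /andP[sHG nsGH].
have def_p2 := Lagrange_index sHG sZH; rewrite indexZ in def_p2.
have /(dvdn_pfactor _ _ p_pr)[e le_e2 eGH] : #|G : H| %| p ^ 2.
  by rewrite -def_p2 dvdn_mulr.
have gt1GH : 1 < #|G : H| by rewrite indexg_gt1.
have gt1HZ : 1 < #|H : 'Z(G)| by rewrite indexg_gt1.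
rewrite {}eGH in def_p2 gt1GH *.
case: e le_e2 def_p2 gt1GH => [|[|[|//]]] // _ def_p2 _.
move/eqP: def_p2; rewrite -[X in _ == X]muln1 eqn_pmul2l ?expn_gt0 ?prime_gt0 //.
by move/eqP=> iHZ; rewrite iHZ in gt1HZ.
Qed.

Lemma card_astab1_conj_tuple n (x : {ffun 'I_n -> gT}) :
  x \in commuting_tuples G n ->
  (p * #|'C_G[x | conj_tuple_action gT n]|
    = #|G| * (if [set x i | i : 'I_n] \subset 'Z(G) then p else 1))%N.
Proof.
rewrite commuting_tuplesE astab1_conj_tuple; set X := [set x i | i : 'I_n].
case/andP=> sXG abX; case: ifPn => [sXZ | nsXZ].
  rewrite (setIidPl _) 1?mulnC // centsC.
  by rewrite (subset_trans sXZ) // subsetIr.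
have sXcX : X \subset 'C_G(X) by rewrite subsetI sXG.
have ltZcX : 'Z(G) \proper 'C_G(X).
  rewrite properE setIS ?centS //=.
  by apply: contra nsXZ => /(subset_trans sXcX).
have ltcXG : 'C_G(X) \proper G.
  rewrite properE subsetIl /=; apply: contra nsXZ => /subsetIP[_ sGcX].
  by rewrite subsetI sXG centsC.
rewrite -(Lagrange (subsetIl G 'C(X))) (index_between_center ltZcX ltcXG).
by rewrite muln1 mulnC.
Qed.

Lemma card_commuting_tuplesS_center_index n :
  (p * #|commuting_tuples G n.+1|
    = #|G| * (#|commuting_tuples G n| + (p - 1) * #|'Z(G)| ^ n))%N.
Proof.
rewrite card_commuting_tuplesS big_distrr (eq_bigr _ (@card_astab1_conj_tuple n)).
rewrite -big_distrr -card_central_tuples; congr (_ * _)%N.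
transitivity (\sum_(x in commuting_tuples G n)
                (1 + ([set x i | i : 'I_n] \subset 'Z(G)) * (p - 1)))%N.
  apply: eq_bigr => x _; case: ifP => _; rewrite ?mul0n ?addn0 // mul1n subnKC //.
  exact: prime_gt0.
rewrite big_split sum1_card -big_distrl mulnC /=; congr (_ + _ * _)%N.
rewrite -sum1_card big_mkcond [RHS]big_mkcond; apply: eq_bigr => x _.
by rewrite inE; case: (x \in _); case: (_ \subset _).
Qed.
End CenterOfIndexPrimeSquare.

Lemma card_center_index_p2 (gT : finGroupType) (G : {group gT}) p m :
  prime p -> #|G| = (p ^ m)%N -> #|G : 'Z(G)| = (p ^ 2)%N ->
  2 < m /\ #|'Z(G)| = (p ^ (m - 2))%N.
Proof.
move=> p_pr cardG indexZ; have p_gt1 := prime_gt1 p_pr.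
have ZpG : (#|'Z(G)| * p ^ 2 = p ^ m)%N by rewrite -indexZ Lagrange ?center_sub.
have /(dvdn_pfactor _ _ p_pr)[e _ cardZ] : #|'Z(G)| %| p ^ m by rewrite -ZpG dvdn_mulr.
have def_m : m = (e + 2)%N by apply: (expnI p_gt1); rewrite expnD -cardZ ZpG.
case: e cardZ def_m => [|e] cardZ -> in cardG *; last by rewrite addn2 subn2 cardZ.
have pG : p.-group G by rewrite /pgroup cardG pnatX pnat_id.
have /eqP/(trivg_center_pgroup pG) G1 : 'Z(G) :==: 1 by rewrite trivg_card1 cardZ.
by move: cardG; rewrite G1 cards1 => /esym/eqP; rewrite -(expn0 p) eqn_exp2l.
Qed.

Section LinearRecurrences.
Local Open Scope ring_scope.

Lemma affine_rec_second_order (R : comRingType) (a e z : R) (c : nat -> R) :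
  (forall n, c n.+1 = a * c n + e * z ^+ n) ->
  forall n, c n.+2 - (a + z) * c n.+1 + a * z * c n = 0.
Proof. by move=> cS n; rewrite (cS n.+1) (cS n) exprS; ring. Qed.

Lemma shifted_affine_rec_second_order (R : idomainType) (g a z d : R)
    (c u : nat -> R) :
  g != 0 -> a * z = g * d -> c 0%N = 1 ->
  (forall n, c n.+1 = a * c n + (g - a) * z ^+ n) ->
  (forall n, g * u n = c n.+1) ->
  [/\ u 0%N = 1, u 1%N - (a + z) * u 0%N = - d &
      forall n, u n.+2 - (a + z) * u n.+1 + a * z * u n = 0].
Proof.
move=> g_neq0 azE c0 cS cu; have gI := mulfI g_neq0.
split=> [||n]; apply: gI.
- by rewrite cu cS c0; ring.
- by rewrite mulrBr mulrCA !cu !cS c0 mulrN -azE; ring.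
rewrite mulr0 mulrDr mulrBr (mulrCA g (a + z)) (mulrCA g (a * z)) !cu.
exact: affine_rec_second_order.
Qed.

Lemma coef_mul_truncated_rec2 (R : comRingType) (b c d : R) (u : nat -> R) :
  u 0%N = 1 -> u 1%N - (b + c) * u 0%N = - d ->
  (forall n, u n.+2 - (b + c) * u n.+1 + b * c * u n = 0) ->
  forall N k, (k <= N)%N ->
  ((1 - b%:P * 'X) * (1 - c%:P * 'X) * \poly_(i < N.+1) u i)`_k
    = (1 - d%:P * 'X)`_k.
Proof.
move=> u0 u1 uS N k le_kN; set P := \poly_(i < N.+1) u i.
have -> : (1 - b%:P * 'X) * (1 - c%:P * 'X) * P
          = P - (b + c)%:P * ('X * P) + (b * c)%:P * ('X * ('X * P)).
  by rewrite polyCD polyCM; ring.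
rewrite coefD !coefB !coefCM !coefXM !coef_poly coef1 coefX.
case: k le_kN => [|[|k]] le_kN /=.
- by rewrite u0 !mulr0 subr0 addr0.
- by rewrite ltnS le_kN mulr0 addr0 mulr1 sub0r.
- by rewrite !ltnS le_kN (ltnW le_kN) (ltnW (ltnW le_kN)) mulr0 subrr.
Qed.
End LinearRecurrences.

Lemma B_truncE (gT : finGroupType) (G : {set gT}) N :
  B_trunc G N = (\poly_(n < N.+1) (beta G n)%:R)%R.
Proof. by rewrite poly_def. Qed.

Theorem theorem8p2 (gT : finGroupType) (G : {group gT}) (p m : nat)
  (hp : prime p) (hG : #|G| = (p ^ m)%N)
  (hZ : #|(G / 'Z(G))%g| = (p ^ 2)%N) :
  forall N k : nat, (k <= N)%N ->
    (((1 - ((p ^ (m - 2))%:R : rat)%:P * 'X) * (1 - ((p ^ (m - 1))%:R : rat)%:P * 'X)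
       * B_trunc G N)`_k
     = (1 - ((p ^ (m - 3))%:R : rat)%:P * 'X)`_k)%R.
Proof.
have indexZ : #|G : 'Z(G)| = (p ^ 2)%N.
  by rewrite -card_quotient ?normal_norm ?center_normal.
have [m_gt2 cardZ] := card_center_index_p2 hp hG indexZ.
have [j def_m] : exists j, m = j.+3 by exists (m - 3); rewrite -addn3 subnK.
subst m; rewrite !subSS !subn0 in cardZ *.
have q_neq0 : (p%:R != 0 :> rat)%R by rewrite pnatr_eq0 -lt0n prime_gt0.
pose c n : rat := (#|commuting_tuples G n|%:R)%R.
have cS n : c n.+1 = ((p ^ j.+2)%:R * c n
                      + ((p ^ j.+3)%:R - (p ^ j.+2)%:R) * (p ^ j.+1)%:R ^+ n)%R.
  apply: (mulfI q_neq0).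
  have := card_commuting_tuplesS_center_index hp indexZ n.
  move/(congr1 (fun k => k%:R : rat)%R).
  rewrite hG cardZ !natrM natrD natrM natrB ?prime_gt0 // !natrX => ->.
  by rewrite !exprS; ring.
have [] := shifted_affine_rec_second_order (d := (p ^ j)%:R%R)
  (u := fun n => (beta G n)%:R%R) _ _ _ cS.
- by rewrite pnatr_eq0 -lt0n expn_gt0 prime_gt0.
- by rewrite -!natrM -!expnD !addSn !addnS.
- by rewrite /c card_commuting_tuples0.
- by move=> n; rewrite -hG -natrM mulnC beta_mul_card.
move=> u0 u1 uS N; rewrite B_truncE [P in (P * _)%R]mulrC.
exact: coef_mul_truncated_rec2.
Qed.
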